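(* For every integer $r\ge7$ there exists $x\in(0,1)$ with $g_r(x)>x$, where $g_r(x)=\mathbb E_{Z\sim\mathcal N(0,1)}\tanh\big(s_r(x)+\sqrt{s_r(x)}Z\big)$ and $s_r(x)=\frac{1}{2(r-1)}\big((1+x)^{r-1}-(1-x)^{r-1}\big)$. *)

From Stdlib Require Import Reals.
From Coquelicot Require Import Coquelicot.
Open Scope R_scope.

Definition std_normal_pdf (z : R) : R := exp (- z ^ 2 / 2) / sqrt (2 * PI).

Definition s_r (r : nat) (x : R) : R :=
  ((1 + x) ^ (r - 1) - (1 - x) ^ (r - 1)) / (2 * (INR r - 1)).

(* g_r(x) = E_{Z ~ N(0,1)} tanh(s_r(x) + sqrt(s_r(x)) Z), written as the
   improper Riemann integral over the whole real line against the density. *)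
Definition g_r (r : nat) (x : R) : R :=
  RInt_gen (fun z => tanh (s_r r x + sqrt (s_r r x) * z) * std_normal_pdf z)
           (Rbar_locally m_infty) (Rbar_locally p_infty).

From Stdlib Require Import Reals Lra Psatz.
From Coquelicot Require Import Coquelicot.
Open Scope R_scope.

(* We take x = 4/5 and write s = s_r(4/5).  The proof has three ingredients.

   1. Elementary bounds.  From cosh y >= 1 + y^2/2 + y^4/24 we get
      sech y <= exp(-3y^2/10) + 1/5, hence
        tanh y >= 1 - exp(-y) (1/5 + exp(-3y^2/10)).
      Moreover s_r(4/5) >= 2.83 for every r >= 7, by an induction on r.
   2. Improper integrals over the line.  We use an epsilon-M notion of
      convergence of int_a^b f as a -> -oo, b -> +oo, with its linearity,
      monotonicity, affine substitution and a comparison test, and we prove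
      the Gaussian integral int exp(-x^2) = sqrt PI (via the classical fact
      that J(t)^2 + int_0^1 exp(-t^2 (1+x^2))/(1+x^2) dx is constant, where
      J(t) = int_0^t exp(-x^2)).
   3. Integrating the bound of 1. against the normal density: after completing
      the squares, every term is a Gaussian integral, giving
        g_r(4/5) >= 1 - exp(-s/2) (1/5 + 1/sqrt(1 + 3s/5)),
      and this is > 4/5 for s >= 2.83. *)

Lemma exp_le_mono a b : a <= b -> exp a <= exp b.
Proof.
  intros Hab. destruct (Rle_lt_or_eq_dec _ _ Hab) as [Hlt | ->].
  - apply Rlt_le, exp_increasing; exact Hlt.
  - apply Rle_refl.
Qed.

Definition taylor5 (a : R) : R := 1 + a + a^2/2 + a^3/6 + a^4/24 + a^5/120.

Lemma taylor5_le_exp a : 0 <= a -> taylor5 a <= exp a.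
Proof.
  intros Ha. pose proof (exp_ge_taylor a 5 Ha) as H. simpl in H.
  unfold taylor5, Rdiv in *. simpl. lra.
Qed.

(* taylor5 a * taylor5 (-a) <= 1 for a >= 0: the product is 1 minus a sum of
   nonnegative even powers of a of degree >= 6. *)
Lemma taylor5_mul_opp_le a : 0 <= a -> taylor5 a * taylor5 (- a) <= 1.
Proof.
  intros Ha. unfold taylor5.
  assert (0 <= a^6) by (apply pow_le; lra).
  assert (0 <= a^8) by (apply pow_le; lra).
  assert (0 <= a^10) by (apply pow_le; lra).
  ring_simplify. nra.
Qed.

(* Quartic lower bound for cosh.  For y >= 0, with T = taylor5 y and E = exp y,
   we have 1 <= T <= E and taylor5 (-y) <= 1/T, so
   2 cosh y = E + 1/E >= T + 1/T >= taylor5 y + taylor5 (-y). *)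
Lemma cosh_ge_quartic y : 1 + y^2/2 + y^4/24 <= cosh y.
Proof.
  assert (Heven : forall a, 0 <= a -> 1 + a^2/2 + a^4/24 <= cosh a).
  { intros a Ha. unfold cosh. rewrite exp_Ropp.
    assert (HT1 : 1 <= taylor5 a).
    { unfold taylor5.
      assert (0 <= a^3) by (apply pow_le; lra).
      assert (0 <= a^4) by (apply pow_le; lra).
      assert (0 <= a^5) by (apply pow_le; lra).
      nra. }
    pose proof (taylor5_le_exp a Ha) as HTE.
    pose proof (taylor5_mul_opp_le a Ha) as Hprod.
    assert (Hsum : 2 * (1 + a^2/2 + a^4/24) = taylor5 a + taylor5 (- a))
      by (unfold taylor5; field).
    set (E := exp a) in *. set (T := taylor5 a) in *.
    assert (HTinv : T * / T = 1) by (field; lra).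
    assert (HEinv : E * / E = 1) by (field; lra).
    assert (0 < / T) by (apply Rinv_0_lt_compat; lra).
    assert (/ E <= / T) by (apply Rinv_le_contravar; lra).
    assert (taylor5 (- a) <= / T) by nra.
    assert (/ E * / T <= 1) by nra.
    assert (T + / T <= E + / E) by nra.
    lra. }
  destruct (Rle_dec 0 y) as [Hy | Hy].
  - apply Heven; exact Hy.
  - replace (cosh y) with (cosh (- y)) by (unfold cosh; rewrite Ropp_involutive, Rplus_comm; reflexivity).
    replace (y^2) with ((- y)^2) by ring. replace (y^4) with ((- y)^4) by ring.
    apply Heven. lra.
Qed.

(* Gaussian-plus-constant upper bound for sech, with t = y^2: for t <= 11/2 use
   exp (-3t/10) >= (1 - 3t/20)^2 and a polynomial inequality; for t >= 11/2 the
   quartic bound already gives cosh y >= 5. *)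
Lemma sech_le y : / cosh y <= exp (- (3/10) * y^2) + 1/5.
Proof.
  set (t := y^2).
  assert (Ht : 0 <= t) by (unfold t; nra).
  assert (Hcosh : 1 + t/2 + t^2/24 <= cosh y).
  { unfold t. replace ((y^2)^2) with (y^4) by ring. apply cosh_ge_quartic. }
  set (C := 1 + t/2 + t^2/24) in *.
  assert (HC1 : 1 <= C) by (unfold C; nra).
  assert (Hinv : / cosh y <= / C) by (apply Rinv_le_contravar; lra).
  assert (HCinv : C * / C = 1) by (field; lra).
  assert (0 < / C) by (apply Rinv_0_lt_compat; lra).
  pose proof (exp_pos (- (3/10) * t)).
  destruct (Rle_lt_dec t (11/2)) as [Hsmall | Hlarge].
  - assert (Hexp : (1 - 3*t/20)^2 <= exp (- (3/10) * t)).
    { replace (- (3/10) * t) with (- (3/20) * t + - (3/20) * t) by field.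
      rewrite exp_plus.
      assert (1 - 3*t/20 <= exp (- (3/20) * t)) by (pose proof (exp_ineq1_le (- (3/20) * t)); lra).
      simpl. rewrite Rmult_1_r. apply Rmult_le_compat; lra. }
    assert (Hpoly : 1 <= C * ((1 - 3*t/20)^2 + 1/5)).
    { unfold C.
      assert (0 <= t * (11/2 - t)) by nra.
      assert (0 <= t * t * (11/2 - t)) by nra.
      assert (0 <= t * t * t * (11/2 - t)) by nra.
      nra. }
    nra.
  - assert (5 <= C) by (unfold C; nra).
    assert (/ C <= / 5) by (apply Rinv_le_contravar; lra).
    lra.
Qed.

(* Lower bound for tanh, via 1 - tanh y = exp(-y) sech y. *)
Lemma tanh_ge y : 1 - exp (- y) * (1/5 + exp (- (3/10) * y^2)) <= tanh y.
Proof.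
  assert (Hcosh : 0 < cosh y) by (unfold cosh; pose proof (exp_pos y); pose proof (exp_pos (- y)); lra).
  assert (Hone : 1 - tanh y = exp (- y) * / cosh y).
  { unfold tanh, sinh. unfold cosh in *.
    assert (exp y * exp (- y) = 1) by (rewrite <- exp_plus, Rplus_opp_r; apply exp_0).
    field. lra. }
  pose proof (sech_le y). pose proof (exp_pos (- y)).
  assert (exp (- y) * / cosh y <= exp (- y) * (exp (- (3/10) * y^2) + 1/5))
    by (apply Rmult_le_compat_l; lra).
  lra.
Qed.

Lemma Rabs_tanh_le_1 y : Rabs (tanh y) <= 1.
Proof.
  unfold tanh, sinh, cosh. pose proof (exp_pos y). pose proof (exp_pos (- y)).
  replace ((exp y - exp (- y)) / 2 / ((exp y + exp (- y)) / 2))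
    with ((exp y - exp (- y)) * / (exp y + exp (- y))) by (field; lra).
  assert ((exp y + exp (- y)) * / (exp y + exp (- y)) = 1) by (field; lra).
  assert (0 < / (exp y + exp (- y))) by (apply Rinv_0_lt_compat; lra).
  apply Rabs_le. split; nra.
Qed.

(* With n = r - 1 >= 6, 2 n s_r(4/5) = (9/5)^n - (1/5)^n >= (283/50) n: true at
   n = 6, and the left side grows by a factor >= 9/5 at each step. *)
Lemma s_r_four_fifths_ge r : (7 <= r)%nat -> 283/100 <= s_r r (4/5).
Proof.
  intros Hr. destruct (Nat.le_exists_sub 7 r Hr) as [m [-> _]].
  assert (Hgrow : forall k, 283/50 * INR (k + 6) <= (9/5)^(k + 6) - (1/5)^(k + 6)).
  { induction k as [| k IH].
    - simpl. lra.
    - replace (S k + 6)%nat with (S (k + 6)) by lia. rewrite S_INR. simpl.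
      assert (6 <= INR (k + 6)) by (rewrite plus_INR; simpl; pose proof (pos_INR k); lra).
      assert (0 <= (1/5)^(k + 6)) by (apply pow_le; lra).
      nra. }
  unfold s_r.
  replace (m + 7 - 1)%nat with (m + 6)%nat by lia.
  replace (INR (m + 7) - 1) with (INR (m + 6)) by (rewrite !plus_INR; simpl; lra).
  replace (1 + 4/5) with (9/5) by lra. replace (1 - 4/5) with (1/5) by lra.
  assert (6 <= INR (m + 6)) by (rewrite plus_INR; simpl; pose proof (pos_INR m); lra).
  pose proof (Hgrow m).
  apply Rmult_le_reg_r with (2 * INR (m + 6)); [lra |].
  unfold Rdiv at 2. rewrite Rmult_assoc, Rinv_l by lra. lra.
Qed.

Lemma continuous_of_ex_derive (f : R -> R) x : ex_derive f x -> continuous f x.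
Proof. exact (@ex_derive_continuous R_AbsRing R_NormedModule f x). Qed.

Lemma ex_RInt_cont (f : R -> R) a b : (forall z, continuous f z) -> ex_RInt f a b.
Proof. intros Hf. apply (@ex_RInt_continuous R_CompleteNormedModule). intros z _. apply Hf. Qed.

Lemma RInt_sub_left (f : R -> R) a b c : (forall z, continuous f z) ->
  RInt f a c - RInt f b c = RInt f a b.
Proof.
  intros Hf. rewrite <- (RInt_Chasles f a b c) by (apply ex_RInt_cont; exact Hf).
  unfold plus; simpl. ring.
Qed.

Lemma RInt_sub_right (f : R -> R) a b c : (forall z, continuous f z) ->
  RInt f a c - RInt f a b = RInt f b c.
Proof.
  intros Hf. rewrite <- (RInt_Chasles f a b c) by (apply ex_RInt_cont; exact Hf).
  unfold plus; simpl. ring.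
Qed.

Lemma Rabs_RInt_le_majorant (f g : R -> R) u v :
  (forall z, continuous f z) -> (forall z, continuous g z) ->
  (forall z, Rabs (f z) <= g z) -> Rabs (RInt f u v) <= Rabs (RInt g u v).
Proof.
  intros Hf Hg Hfg.
  assert (Hord : forall u v, u <= v -> Rabs (RInt f u v) <= Rabs (RInt g u v)).
  { clear u v. intros u v Huv.
    eapply Rle_trans; [apply abs_RInt_le; [exact Huv | apply ex_RInt_cont, Hf] |].
    eapply Rle_trans; [| apply Rle_abs].
    apply RInt_le; [exact Huv | | apply ex_RInt_cont, Hg | intros; apply Hfg].
    apply ex_RInt_cont. intros z. apply continuous_comp; [apply Hf | apply continuous_Rabs]. }
  destruct (Rle_dec u v) as [Huv | Hvu].
  - apply Hord; exact Huv.
  - rewrite <- (opp_RInt_swap f), <- (opp_RInt_swap g) by (apply ex_RInt_cont; assumption).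
    unfold opp; simpl. rewrite !Rabs_Ropp. apply Hord. lra.
Qed.

Definition is_RInt_line (f : R -> R) (l : R) : Prop :=
  forall eps : R, 0 < eps ->
    exists M, forall a b, a < - M -> M < b -> Rabs (RInt f a b - l) < eps.

Lemma is_RInt_line_RInt_gen (f : R -> R) l :
  (forall z, continuous f z) -> is_RInt_line f l ->
  RInt_gen f (Rbar_locally m_infty) (Rbar_locally p_infty) = l.
Proof.
  intros Hf Hl. apply is_RInt_gen_unique.
  intros P [eps HP]. destruct (Hl eps (cond_pos eps)) as [M HM].
  apply Filter_prod with (fun a => a < - M) (fun b => M < b).
  - exists (- M). auto.
  - exists M. auto.
  - intros a b Ha Hb. exists (RInt f a b). split.
    + apply (@RInt_correct R_CompleteNormedModule), ex_RInt_cont, Hf.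
    + apply HP, HM; assumption.
Qed.

Lemma is_RInt_line_plus (f g : R -> R) lf lg :
  (forall z, continuous f z) -> (forall z, continuous g z) ->
  is_RInt_line f lf -> is_RInt_line g lg -> is_RInt_line (fun z => f z + g z) (lf + lg).
Proof.
  intros Hf Hg Hlf Hlg eps Heps.
  destruct (Hlf (eps/2)) as [M1 HM1]; [lra |]. destruct (Hlg (eps/2)) as [M2 HM2]; [lra |].
  exists (Rmax M1 M2). intros a b Ha Hb.
  pose proof (Rmax_l M1 M2). pose proof (Rmax_r M1 M2).
  replace (RInt (fun z => f z + g z) a b) with (RInt f a b + RInt g a b)
    by (symmetry; apply (@RInt_plus R_CompleteNormedModule); apply ex_RInt_cont; assumption).
  specialize (HM1 a b ltac:(lra) ltac:(lra)). specialize (HM2 a b ltac:(lra) ltac:(lra)).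
  replace (RInt f a b + RInt g a b - (lf + lg)) with ((RInt f a b - lf) + (RInt g a b - lg)) by ring.
  eapply Rle_lt_trans; [apply Rabs_triang | lra].
Qed.

Lemma is_RInt_line_scal (f : R -> R) c l :
  (forall z, continuous f z) -> is_RInt_line f l -> is_RInt_line (fun z => c * f z) (c * l).
Proof.
  intros Hf Hl eps Heps.
  assert (Hc : 0 < Rabs c + 1) by (pose proof (Rabs_pos c); lra).
  destruct (Hl (eps / (Rabs c + 1))) as [M HM]; [apply Rdiv_lt_0_compat; assumption |].
  exists M. intros a b Ha Hb.
  replace (RInt (fun z => c * f z) a b) with (c * RInt f a b)
    by (symmetry; apply (@RInt_scal R_CompleteNormedModule); apply ex_RInt_cont; exact Hf).
  specialize (HM a b Ha Hb).
  replace (c * RInt f a b - c * l) with (c * (RInt f a b - l)) by ring.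
  rewrite Rabs_mult.
  apply Rmult_lt_compat_l with (r := Rabs c + 1) in HM; [| exact Hc].
  replace ((Rabs c + 1) * (eps / (Rabs c + 1))) with eps in HM by (field; lra).
  pose proof (Rabs_pos c). pose proof (Rabs_pos (RInt f a b - l)). nra.
Qed.

Lemma is_RInt_line_ext (f g : R -> R) l :
  (forall z, f z = g z) -> is_RInt_line f l -> is_RInt_line g l.
Proof.
  intros Hfg Hf eps Heps. destruct (Hf eps Heps) as [M HM]. exists M. intros a b Ha Hb.
  rewrite <- (RInt_ext f g) by (intros; apply Hfg). apply HM; assumption.
Qed.

Lemma is_RInt_line_comp_lin (g : R -> R) w d l :
  (forall z, continuous g z) -> 0 < w ->
  is_RInt_line g l -> is_RInt_line (fun z => g (w * z + d)) (l / w).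
Proof.
  intros Hg Hw Hl eps Heps.
  destruct (Hl (eps * w)) as [M HM]; [nra |].
  exists ((Rabs M + Rabs d) / w). intros a b Ha Hb.
  pose proof (Rle_abs M). pose proof (Rle_abs (- M)). pose proof (Rle_abs d). pose proof (Rle_abs (- d)).
  rewrite Rabs_Ropp in *.
  assert (Hwa : w * a + d < - M).
  { apply Rmult_lt_compat_l with (r := w) in Ha; [| exact Hw].
    replace (w * - ((Rabs M + Rabs d) / w)) with (- (Rabs M + Rabs d)) in Ha by (field; lra). lra. }
  assert (Hwb : M < w * b + d).
  { apply Rmult_lt_compat_l with (r := w) in Hb; [| exact Hw].
    replace (w * ((Rabs M + Rabs d) / w)) with (Rabs M + Rabs d) in Hb by (field; lra). lra. }
  assert (Hcont : forall z, continuous (fun z => g (w * z + d)) z).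
  { intros z. apply (continuous_comp (fun z => w * z + d) g); [| apply Hg].
    apply continuous_of_ex_derive. auto_derive. exact I. }
  assert (Hcomp : RInt (fun z => w * g (w * z + d)) a b = RInt g (w * a + d) (w * b + d))
    by exact (@RInt_comp_lin R_CompleteNormedModule g w d a b (ex_RInt_cont g _ _ Hg)).
  assert (Hscal : RInt (fun z => w * g (w * z + d)) a b = w * RInt (fun z => g (w * z + d)) a b)
    by exact (@RInt_scal R_CompleteNormedModule _ a b w (ex_RInt_cont _ a b Hcont)).
  assert (Hsubst : RInt (fun z => g (w * z + d)) a b = / w * RInt g (w * a + d) (w * b + d)).
  { rewrite <- Hcomp, Hscal, <- Rmult_assoc, Rinv_l, Rmult_1_l; [reflexivity | lra]. }
  rewrite Hsubst.
  replace (/ w * RInt g (w * a + d) (w * b + d) - l / w) with (/ w * (RInt g (w * a + d) (w * b + d) - l))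
    by (field; lra).
  rewrite Rabs_mult, Rabs_pos_eq by (apply Rlt_le, Rinv_0_lt_compat; exact Hw).
  specialize (HM _ _ Hwa Hwb).
  apply Rmult_lt_compat_l with (r := / w) in HM; [| apply Rinv_0_lt_compat; exact Hw].
  replace (/ w * (eps * w)) with eps in HM by (field; lra). exact HM.
Qed.

Lemma is_RInt_line_le (f h : R -> R) lf lh :
  (forall z, continuous f z) -> (forall z, continuous h z) -> (forall z, h z <= f z) ->
  is_RInt_line f lf -> is_RInt_line h lh -> lh <= lf.
Proof.
  intros Hf Hh Hhf Hlf Hlh.
  destruct (Rle_dec lh lf) as [Hle | Hgt]; [exact Hle | exfalso].
  set (e := (lh - lf) / 2).
  destruct (Hlf e) as [M1 HM1]; [unfold e; lra |]. destruct (Hlh e) as [M2 HM2]; [unfold e; lra |].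
  set (M := Rabs M1 + Rabs M2 + 1).
  pose proof (Rle_abs M1). pose proof (Rle_abs M2). pose proof (Rabs_pos M1). pose proof (Rabs_pos M2).
  specialize (HM1 (- M - 1) (M + 1) ltac:(unfold M; lra) ltac:(unfold M; lra)).
  specialize (HM2 (- M - 1) (M + 1) ltac:(unfold M; lra) ltac:(unfold M; lra)).
  assert (RInt h (- M - 1) (M + 1) <= RInt f (- M - 1) (M + 1)).
  { apply RInt_le; [unfold M; lra | apply ex_RInt_cont, Hh | apply ex_RInt_cont, Hf | intros; apply Hhf]. }
  apply Rabs_def2 in HM1. apply Rabs_def2 in HM2. unfold e in *. lra.
Qed.

(* Cauchy criterion for a dominated function: the partial integrals of f over
   [a, b] and [a', b'] differ by two tails, each bounded by the corresponding
   tail of g, which is a difference of two partial integrals of g close to lg. *)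
Lemma RInt_dominated_cauchy (f g : R -> R) lg :
  (forall z, continuous f z) -> (forall z, continuous g z) ->
  (forall z, Rabs (f z) <= g z) -> is_RInt_line g lg ->
  forall eps, 0 < eps -> exists M, forall a b a' b',
    a < - M -> M < b -> a' < - M -> M < b' -> Rabs (RInt f a' b' - RInt f a b) < eps.
Proof.
  intros Hf Hg Hfg Hlg eps Heps.
  destruct (Hlg (eps / 4)) as [M HM]; [lra |].
  exists M. intros a b a' b' Ha Hb Ha' Hb'.
  assert (Hsplit : RInt f a' b' - RInt f a b = RInt f a' a + RInt f b b').
  { rewrite <- (RInt_sub_left f a' a b') by exact Hf.
    rewrite <- (RInt_sub_right f a b b') by exact Hf. ring. }
  assert (Htail_l : Rabs (RInt g a' a) < eps / 2).
  { rewrite <- (RInt_sub_left g a' a b) by exact Hg.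
    replace (RInt g a' b - RInt g a b) with ((RInt g a' b - lg) - (RInt g a b - lg)) by ring.
    eapply Rle_lt_trans; [apply Rabs_triang |]. rewrite Rabs_Ropp.
    pose proof (HM a' b Ha' Hb). pose proof (HM a b Ha Hb). lra. }
  assert (Htail_r : Rabs (RInt g b b') < eps / 2).
  { rewrite <- (RInt_sub_right g a b b') by exact Hg.
    replace (RInt g a b' - RInt g a b) with ((RInt g a b' - lg) - (RInt g a b - lg)) by ring.
    eapply Rle_lt_trans; [apply Rabs_triang |]. rewrite Rabs_Ropp.
    pose proof (HM a b' Ha Hb'). pose proof (HM a b Ha Hb). lra. }
  rewrite Hsplit. eapply Rle_lt_trans; [apply Rabs_triang |].
  pose proof (Rabs_RInt_le_majorant f g a' a Hf Hg Hfg).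
  pose proof (Rabs_RInt_le_majorant f g b b' Hf Hg Hfg).
  lra.
Qed.

(* Comparison test: a continuous function dominated by a function with a
   convergent integral has a convergent integral (completeness of R). *)
Lemma is_RInt_line_dominated (f g : R -> R) lg :
  (forall z, continuous f z) -> (forall z, continuous g z) ->
  (forall z, Rabs (f z) <= g z) -> is_RInt_line g lg -> exists lf, is_RInt_line f lf.
Proof.
  intros Hf Hg Hfg Hlg.
  set (F := filter_prod (Rbar_locally m_infty) (Rbar_locally p_infty)).
  assert (HF : ProperFilter F) by (apply filter_prod_proper; apply Rbar_locally_filter).
  destruct (proj1 (@filterlim_locally_cauchy (R * R) R_CompleteSpace F HF
                     (fun ab => RInt f (fst ab) (snd ab)))) as [lf Hlf].
  - intros eps.
    destruct (RInt_dominated_cauchy f g lg Hf Hg Hfg Hlg eps (cond_pos eps)) as [M HM].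
    exists (fun ab => fst ab < - M /\ M < snd ab). split.
    + apply Filter_prod with (fun a => a < - M) (fun b => M < b);
        [exists (- M); auto | exists M; auto | intros a b Ha Hb; simpl; auto].
    + intros [a b] [a' b'] [Ha Hb] [Ha' Hb']. apply HM; assumption.
  - exists lf. intros eps Heps.
    destruct (Hlf _ (locally_ball lf (mkposreal eps Heps))) as [P Q [M1 HM1] [M2 HM2] HPQ].
    exists (Rmax (- M1) M2). intros a b Ha Hb.
    apply (HPQ a b).
    + apply HM1. pose proof (Rmax_l (- M1) M2). lra.
    + apply HM2. pose proof (Rmax_r (- M1) M2). lra.
Qed.

Definition gauss (x : R) : R := exp (- x^2).

Definition gauss_partial (t : R) : R := RInt gauss 0 t.

(* The auxiliary integral of the classical proof of int exp(-x^2) = sqrt PI: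
   G t = int_0^1 exp(-t^2 (1 + x^2)) / (1 + x^2) dx, chosen so that
   J^2 + G has derivative 0. *)
Definition gauss_aux_integrand (t x : R) : R := exp (- (t^2 * (1 + x^2))) / (1 + x^2).
Definition gauss_aux (t : R) : R := RInt (gauss_aux_integrand t) 0 1.

Lemma gauss_continuous z : continuous gauss z.
Proof. apply continuous_of_ex_derive. unfold gauss. auto_derive. exact I. Qed.

Lemma one_plus_sq_pos x : 0 < 1 + x^2.
Proof. nra. Qed.

Lemma gauss_aux_integrand_continuous t x : continuous (gauss_aux_integrand t) x.
Proof.
  apply continuous_of_ex_derive. unfold gauss_aux_integrand. auto_derive.
  pose proof (one_plus_sq_pos x). lra.
Qed.

Lemma gauss_partial_derive t : is_derive gauss_partial t (gauss t).
Proof.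
  apply (@is_derive_RInt R_NormedModule gauss gauss_partial 0 t).
  - apply filter_forall. intros b.
    apply (@RInt_correct R_CompleteNormedModule), ex_RInt_cont, gauss_continuous.
  - apply gauss_continuous.
Qed.

Lemma gauss_aux_integrand_derive t x :
  is_derive (fun u => gauss_aux_integrand u x) t (- 2 * t * exp (- (t^2 * (1 + x^2)))).
Proof.
  pose proof (one_plus_sq_pos x).
  unfold gauss_aux_integrand. auto_derive; [lra |].
  replace (t * (t * 1) * (1 + x * (x * 1))) with (t^2 * (1 + x^2)) by ring.
  field. lra.
Qed.

Lemma gauss_aux_derive_RInt t :
  is_derive gauss_aux t (RInt (fun x => - 2 * t * exp (- (t^2 * (1 + x^2)))) 0 1).
Proof.
  assert (HD : forall u x, Derive (fun z => gauss_aux_integrand z x) u = - 2 * u * exp (- (u^2 * (1 + x^2))))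
    by (intros; apply is_derive_unique, gauss_aux_integrand_derive).
  rewrite <- (RInt_ext (fun x => Derive (fun u => gauss_aux_integrand u x) t)) by (intros; apply HD).
  apply (is_derive_RInt_param gauss_aux_integrand 0 1 t).
  - apply filter_forall. intros y x _. eexists. apply gauss_aux_integrand_derive.
  - intros x _.
    apply continuity_2d_pt_ext with (f := fun u v => - 2 * u * exp (- (u^2 * (1 + v^2))));
      [intros; symmetry; apply HD |].
    apply continuity_2d_pt_mult.
    + apply continuity_2d_pt_mult; [apply continuity_2d_pt_const | apply continuity_2d_pt_id1].
    + apply continuity_1d_2d_pt_comp with (f := exp);
        [apply derivable_continuous_pt, derivable_pt_exp |].
      apply continuity_2d_pt_opp, continuity_2d_pt_mult; simpl.
      * apply continuity_2d_pt_mult; [apply continuity_2d_pt_id1 |].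
        apply continuity_2d_pt_mult; [apply continuity_2d_pt_id1 | apply continuity_2d_pt_const].
      * apply continuity_2d_pt_plus; [apply continuity_2d_pt_const |].
        apply continuity_2d_pt_mult; [apply continuity_2d_pt_id2 |].
        apply continuity_2d_pt_mult; [apply continuity_2d_pt_id2 | apply continuity_2d_pt_const].
  - apply filter_forall. intros y. apply ex_RInt_cont, gauss_aux_integrand_continuous.
Qed.

(* The substitution y = t x turns the derivative into -2 exp(-t^2) J(t). *)
Lemma gauss_aux_derive t : is_derive gauss_aux t (- 2 * exp (- t^2) * gauss_partial t).
Proof.
  assert (Hsubst : gauss_partial t = RInt (fun y => t * gauss (t * y + 0)) 0 1).
  { symmetry. unfold gauss_partial.
    pose proof (@RInt_comp_lin R_CompleteNormedModule gauss t 0 0 1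
                  (ex_RInt_cont _ _ _ gauss_continuous)) as H.
    rewrite Rmult_0_r, Rplus_0_r, Rmult_1_r, Rplus_0_r in H. exact H. }
  assert (Hcont : forall y, continuous (fun y => t * gauss (t * y + 0)) y)
    by (intros y; apply continuous_of_ex_derive; unfold gauss; auto_derive; exact I).
  replace (- 2 * exp (- t^2) * gauss_partial t)
    with (RInt (fun x => - 2 * t * exp (- (t^2 * (1 + x^2)))) 0 1).
  { apply gauss_aux_derive_RInt. }
  rewrite Hsubst.
  rewrite <- (@RInt_scal R_CompleteNormedModule _ 0 1 (- 2 * exp (- t^2))) by (apply ex_RInt_cont, Hcont).
  apply RInt_ext. intros x _.
  assert (E : exp (- (t^2 * (1 + x^2))) = exp (- t^2) * gauss (t * x + 0))
    by (unfold gauss; rewrite <- exp_plus; f_equal; ring).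
  rewrite E. unfold scal; simpl; unfold mult; simpl. ring.
Qed.

(* G(0) = int_0^1 1/(1+x^2) dx = atan 1 = PI/4. *)
Lemma gauss_aux_0 : gauss_aux 0 = PI / 4.
Proof.
  transitivity (RInt (fun x => / (1 + x^2)) 0 1).
  { apply RInt_ext. intros x _. unfold gauss_aux_integrand.
    replace (- (0^2 * (1 + x^2))) with 0 by ring. rewrite exp_0. unfold Rdiv. apply Rmult_1_l. }
  apply is_RInt_unique.
  replace (PI / 4) with (minus (atan 1) (atan 0))
    by (rewrite atan_1, atan_0; unfold minus, plus, opp; simpl; field).
  apply (@is_RInt_derive R_CompleteNormedModule atan).
  - intros x _. pose proof (is_derive_atan x) as H. unfold Rsqr in H.
    replace (x^2) with (x * x) by ring. exact H.
  - intros x _. apply continuous_of_ex_derive. auto_derive. pose proof (one_plus_sq_pos x). lra.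
Qed.

Lemma gauss_partial_sq_add_aux t : 0 <= t -> gauss_partial t * gauss_partial t + gauss_aux t = PI / 4.
Proof.
  intros Ht.
  assert (Hval0 : gauss_partial 0 * gauss_partial 0 + gauss_aux 0 = PI / 4).
  { unfold gauss_partial at 1 2. rewrite RInt_point, gauss_aux_0. unfold zero; simpl. ring. }
  destruct (Rle_lt_or_eq_dec _ _ Ht) as [Hpos | <-]; [| exact Hval0].
  rewrite <- Hval0. symmetry.
  apply (eq_is_derive (fun x => gauss_partial x * gauss_partial x + gauss_aux x)); [| exact Hpos].
  intros s _.
  pose proof (is_derive_plus _ _ s _ _
                (is_derive_mult _ _ s _ _ (gauss_partial_derive s) (gauss_partial_derive s) Rmult_comm)
                (gauss_aux_derive s)) as D.
  match type of D with is_derive _ _ ?v => replace v with 0 in D end; [exact D |].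
  unfold plus, mult, gauss; simpl. ring.
Qed.

(* 0 <= G(t) <= exp(-t^2) G(0), since t^2 (1 + x^2) >= t^2. *)
Lemma gauss_aux_bounds t : 0 <= gauss_aux t <= exp (- t^2) * (PI / 4).
Proof.
  split.
  - apply RInt_ge_0; [lra | apply ex_RInt_cont, gauss_aux_integrand_continuous |].
    intros x _. unfold gauss_aux_integrand.
    pose proof (exp_pos (- (t^2 * (1 + x^2)))). pose proof (one_plus_sq_pos x).
    apply Rlt_le, Rdiv_lt_0_compat; assumption.
  - rewrite <- gauss_aux_0.
    unfold gauss_aux at 2. unfold gauss_aux_integrand.
    replace (exp (- t^2) * RInt (fun x => exp (- (0^2 * (1 + x^2))) / (1 + x^2)) 0 1)
      with (RInt (fun x => exp (- t^2) * (exp (- (0^2 * (1 + x^2))) / (1 + x^2))) 0 1).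
    2:{ apply (@RInt_scal R_CompleteNormedModule). apply ex_RInt_cont, gauss_aux_integrand_continuous. }
    apply RInt_le; [lra | apply ex_RInt_cont, gauss_aux_integrand_continuous | |].
    + apply ex_RInt_cont. intros x. apply continuous_of_ex_derive. auto_derive.
      pose proof (one_plus_sq_pos x). lra.
    + intros x _. unfold gauss_aux_integrand, Rdiv.
      replace (- (0^2 * (1 + x^2))) with 0 by ring. rewrite exp_0, Rmult_1_l.
      apply Rmult_le_compat_r; [apply Rlt_le, Rinv_0_lt_compat, one_plus_sq_pos |].
      apply exp_le_mono. assert (0 <= t^2 * x^2) by (apply Rmult_le_pos; nra). nra.
Qed.

Lemma gauss_partial_nonneg t : 0 <= t -> 0 <= gauss_partial t.
Proof.
  intros Ht. apply RInt_ge_0; [exact Ht | apply ex_RInt_cont, gauss_continuous |].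
  intros x _. apply Rlt_le, exp_pos.
Qed.

(* Quantitative convergence J(t) -> sqrt PI / 2, from J^2 = PI/4 - G and
   0 <= G <= exp(-t^2) PI/4:  (c - J)(c + J) <= c^2 exp(-t^2) with c + J >= c. *)
Lemma gauss_partial_approx t : 0 <= t ->
  Rabs (gauss_partial t - sqrt PI / 2) <= sqrt PI / 2 * exp (- t^2).
Proof.
  intros Ht.
  pose proof (gauss_partial_sq_add_aux t Ht). pose proof (gauss_aux_bounds t).
  pose proof (gauss_partial_nonneg t Ht). pose proof (exp_pos (- t^2)).
  assert (Hc : 0 < sqrt PI / 2) by (pose proof (sqrt_lt_R0 PI PI_RGT_0); lra).
  assert (Hc2 : sqrt PI / 2 * (sqrt PI / 2) = PI / 4)
    by (replace (sqrt PI / 2 * (sqrt PI / 2)) with (sqrt PI * sqrt PI / 4) by field;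
        rewrite sqrt_sqrt by (apply Rlt_le, PI_RGT_0); reflexivity).
  set (c := sqrt PI / 2) in *. set (j := gauss_partial t) in *. set (e := exp (- t^2)) in *.
  assert (j <= c) by nra.
  rewrite Rabs_left1 by lra.
  assert ((c - j) * (c + j) <= c * c * e) by nra.
  nra.
Qed.

(* J is odd, which reduces the negative tail to the positive one. *)
Lemma gauss_partial_opp t : gauss_partial (- t) = - gauss_partial t.
Proof.
  unfold gauss_partial.
  pose proof (@RInt_comp_lin R_CompleteNormedModule gauss (-1) 0 0 t
                (ex_RInt_cont _ _ _ gauss_continuous)) as H.
  rewrite Rmult_0_r, !Rplus_0_r in H. replace (-1 * t) with (- t) in H by ring.
  rewrite <- H.
  replace (- RInt gauss 0 t) with (-1 * RInt gauss 0 t) by ring.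
  rewrite <- (@RInt_scal R_CompleteNormedModule) by (apply ex_RInt_cont, gauss_continuous).
  apply RInt_ext. intros x _. unfold scal; simpl; unfold mult; simpl; unfold gauss.
  replace ((-1 * x + 0)^2) with (x^2) by ring. reflexivity.
Qed.

(* A crude tail bound exp(-t^2) <= 1/t, enough for convergence of J. *)
Lemma exp_neg_sq_le_inv t : 0 < t -> exp (- t^2) <= / t.
Proof.
  intros Ht. rewrite exp_Ropp. apply Rinv_le_contravar; [exact Ht |].
  pose proof (exp_ineq1_le (t^2)). nra.
Qed.

Lemma is_RInt_line_gauss : is_RInt_line gauss (sqrt PI).
Proof.
  intros eps Heps.
  set (c := sqrt PI / 2).
  assert (Hc : 0 < c) by (unfold c; pose proof (sqrt_lt_R0 PI PI_RGT_0); lra).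
  assert (Htail : forall t, 4 * c / eps < t -> Rabs (gauss_partial t - c) < eps / 2).
  { intros t Ht.
    assert (HM : 0 < 4 * c / eps) by (apply Rdiv_lt_0_compat; lra).
    eapply Rle_lt_trans; [apply gauss_partial_approx; lra |]. fold c.
    assert (c * exp (- t^2) <= c * / t) by (apply Rmult_le_compat_l, exp_neg_sq_le_inv; lra).
    assert (c * / t < c * / (4 * c / eps))
      by (apply Rmult_lt_compat_l, Rinv_lt_contravar; [| apply Rmult_lt_0_compat |]; lra).
    replace (c * / (4 * c / eps)) with (eps / 4) in * by (field; lra).
    lra. }
  exists (4 * c / eps). intros a b Ha Hb.
  rewrite <- (RInt_sub_right gauss 0 a b gauss_continuous).
  fold (gauss_partial b) (gauss_partial a).
  rewrite <- (Ropp_involutive a), gauss_partial_opp.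
  replace (gauss_partial b - - gauss_partial (- a) - sqrt PI)
    with ((gauss_partial b - c) + (gauss_partial (- a) - c)) by (unfold c; field).
  eapply Rle_lt_trans; [apply Rabs_triang |].
  pose proof (Htail b Hb). pose proof (Htail (- a) ltac:(lra)). lra.
Qed.

Lemma is_RInt_line_gauss_affine a c : 0 < a ->
  is_RInt_line (fun z => exp (- (a * (z + c)^2))) (sqrt PI / sqrt a).
Proof.
  intros Ha.
  assert (Hw : 0 < sqrt a) by (apply sqrt_lt_R0; exact Ha).
  apply is_RInt_line_ext with (fun z => gauss (sqrt a * z + sqrt a * c)).
  { intros z. unfold gauss. f_equal. f_equal.
    replace ((sqrt a * z + sqrt a * c)^2) with (sqrt a * sqrt a * (z + c)^2) by ring.
    rewrite sqrt_sqrt by lra. reflexivity. }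
  apply is_RInt_line_comp_lin; [exact gauss_continuous | exact Hw | exact is_RInt_line_gauss].
Qed.

Definition gauss_kernel (a c z : R) : R := / sqrt (2 * PI) * exp (- (a * (z + c)^2)).

Lemma gauss_kernel_continuous a c z : continuous (gauss_kernel a c) z.
Proof. apply continuous_of_ex_derive. unfold gauss_kernel. auto_derive. exact I. Qed.

Lemma is_RInt_line_gauss_kernel a c : 0 < a -> is_RInt_line (gauss_kernel a c) (/ sqrt (2 * a)).
Proof.
  intros Ha.
  replace (/ sqrt (2 * a)) with (/ sqrt (2 * PI) * (sqrt PI / sqrt a)).
  - apply is_RInt_line_scal; [| apply is_RInt_line_gauss_affine; exact Ha].
    intros z. apply continuous_of_ex_derive. auto_derive. exact I.
  - pose proof (sqrt_lt_R0 PI PI_RGT_0). pose proof (sqrt_lt_R0 a Ha). pose proof (sqrt_lt_R0 2 Rlt_0_2).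
    rewrite !sqrt_mult by (try apply Rlt_le, PI_RGT_0; lra). field. lra.
Qed.

Lemma std_normal_pdf_kernel z : std_normal_pdf z = gauss_kernel (1/2) 0 z.
Proof.
  unfold std_normal_pdf, gauss_kernel. rewrite Rplus_0_r.
  replace (- (1/2 * z^2)) with (- z^2 / 2) by field. apply Rmult_comm.
Qed.

(* Pointwise lower bound for the integrand: tanh_ge at y = s + sqrt s z, where
   completing the square gives exp(-y) pdf(z) = exp(-s/2) pdf(z + sqrt s) and
   y^2 = s (z + sqrt s)^2. *)
Lemma tanh_integrand_ge s z : 0 <= s ->
  std_normal_pdf z - exp (- s / 2) * (1/5 * gauss_kernel (1/2) (sqrt s) z
                                      + gauss_kernel ((1 + 3/5 * s) / 2) (sqrt s) z)
  <= tanh (s + sqrt s * z) * std_normal_pdf z.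
Proof.
  intros Hs.
  assert (Hq : sqrt s * sqrt s = s) by (apply sqrt_sqrt; exact Hs).
  set (q := sqrt s) in *. set (y := s + q * z).
  assert (Hshift : exp (- s / 2) * exp (- (1/2 * (z + q)^2)) = exp (- (1/2 * (z + 0)^2)) * exp (- y)).
  { rewrite <- !exp_plus. f_equal. unfold y. rewrite <- Hq. field. }
  assert (Hsq : exp (- ((1 + 3/5 * s) / 2 * (z + q)^2)) = exp (- (1/2 * (z + q)^2)) * exp (- (3/10) * y^2)).
  { rewrite <- exp_plus. f_equal. unfold y. rewrite <- Hq. field. }
  rewrite std_normal_pdf_kernel. unfold gauss_kernel. rewrite Hsq.
  set (K := / sqrt (2 * PI)). set (P := exp (- (1/2 * (z + 0)^2))) in *.
  set (X := exp (- (3/10) * y^2)).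
  replace (K * P - exp (- s / 2) * (1/5 * (K * exp (- (1/2 * (z + q)^2)))
                                   + K * (exp (- (1/2 * (z + q)^2)) * X)))
    with (K * P * (1 - exp (- y) * (1/5 + X))).
  2:{ transitivity (K * P - K * (P * exp (- y)) * (1/5 + X)); [field |].
      rewrite <- Hshift. field. }
  rewrite (Rmult_comm (tanh y)).
  apply Rmult_le_compat_l; [| apply tanh_ge].
  apply Rmult_le_pos; [apply Rlt_le, Rinv_0_lt_compat, sqrt_lt_R0 | apply Rlt_le, exp_pos].
  pose proof PI_RGT_0. lra.
Qed.

Lemma std_normal_pdf_continuous z : continuous std_normal_pdf z.
Proof. apply continuous_of_ex_derive. unfold std_normal_pdf. auto_derive. exact I. Qed.

Lemma is_RInt_line_gauss_kernel_half c : is_RInt_line (gauss_kernel (1/2) c) 1.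
Proof.
  replace 1 with (/ sqrt (2 * (1/2))) at 2 by (replace (2 * (1/2)) with 1 by field; rewrite sqrt_1; field).
  apply is_RInt_line_gauss_kernel. lra.
Qed.

Lemma is_RInt_line_std_normal_pdf : is_RInt_line std_normal_pdf 1.
Proof.
  apply is_RInt_line_ext with (gauss_kernel (1/2) 0); [intros; symmetry; apply std_normal_pdf_kernel |].
  apply is_RInt_line_gauss_kernel_half.
Qed.

Lemma std_normal_pdf_nonneg z : 0 <= std_normal_pdf z.
Proof.
  unfold std_normal_pdf. apply Rmult_le_pos; [apply Rlt_le, exp_pos |].
  apply Rlt_le, Rinv_0_lt_compat, sqrt_lt_R0. pose proof PI_RGT_0. lra.
Qed.

Lemma tanh_integrand_continuous s z :
  continuous (fun z => tanh (s + sqrt s * z) * std_normal_pdf z) z.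
Proof.
  apply continuous_of_ex_derive. unfold std_normal_pdf, tanh, sinh, cosh.
  auto_derive. pose proof (exp_pos (s + sqrt s * z)). pose proof (exp_pos (- (s + sqrt s * z))).
  repeat split; lra.
Qed.

(* The Gaussian average of tanh exists: the integrand is dominated by the density. *)
Lemma tanh_integrand_integrable s :
  exists l, is_RInt_line (fun z => tanh (s + sqrt s * z) * std_normal_pdf z) l.
Proof.
  apply (is_RInt_line_dominated _ std_normal_pdf 1);
    [apply tanh_integrand_continuous | exact std_normal_pdf_continuous | | exact is_RInt_line_std_normal_pdf].
  intros z. rewrite Rabs_mult, (Rabs_pos_eq (std_normal_pdf z)) by apply std_normal_pdf_nonneg.
  pose proof (Rabs_tanh_le_1 (s + sqrt s * z)). pose proof (Rabs_pos (tanh (s + sqrt s * z))).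
  pose proof (std_normal_pdf_nonneg z). nra.
Qed.

Lemma tanh_gauss_average_ge s : 0 <= s ->
  1 - exp (- s / 2) * (1/5 + / sqrt (1 + 3/5 * s))
  <= RInt_gen (fun z => tanh (s + sqrt s * z) * std_normal_pdf z)
       (Rbar_locally m_infty) (Rbar_locally p_infty).
Proof.
  intros Hs.
  set (a := (1 + 3/5 * s) / 2).
  set (k := fun z => 1/5 * gauss_kernel (1/2) (sqrt s) z + gauss_kernel a (sqrt s) z).
  set (h := fun z => std_normal_pdf z + - exp (- s / 2) * k z).
  assert (Hk : forall z, continuous k z)
    by (intros z; apply continuous_of_ex_derive; unfold k, gauss_kernel; auto_derive; exact I).
  assert (Hlk : is_RInt_line k (1/5 * 1 + / sqrt (1 + 3/5 * s))).
  { apply is_RInt_line_plus; [| apply gauss_kernel_continuous | |].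
    - intros z. apply continuous_of_ex_derive. unfold gauss_kernel. auto_derive. exact I.
    - apply is_RInt_line_scal; [apply gauss_kernel_continuous | apply is_RInt_line_gauss_kernel_half].
    - replace (1 + 3/5 * s) with (2 * a) by (unfold a; field).
      apply is_RInt_line_gauss_kernel. unfold a. lra. }
  assert (Hlh : is_RInt_line h (1 + - exp (- s / 2) * (1/5 * 1 + / sqrt (1 + 3/5 * s)))).
  { apply is_RInt_line_plus;
      [exact std_normal_pdf_continuous | | exact is_RInt_line_std_normal_pdf | apply is_RInt_line_scal; assumption].
    intros z. apply continuous_of_ex_derive. unfold k, gauss_kernel. auto_derive. exact I. }
  destruct (tanh_integrand_integrable s) as [lf Hlf].
  rewrite (is_RInt_line_RInt_gen (fun z => tanh (s + sqrt s * z) * std_normal_pdf z) lf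
             (tanh_integrand_continuous s) Hlf).
  replace (1 - exp (- s / 2) * (1/5 + / sqrt (1 + 3/5 * s)))
    with (1 + - exp (- s / 2) * (1/5 * 1 + / sqrt (1 + 3/5 * s))) by ring.
  apply (is_RInt_line_le (fun z => tanh (s + sqrt s * z) * std_normal_pdf z) h);
    [apply tanh_integrand_continuous | | | exact Hlf | exact Hlh].
  - intros z. apply continuous_of_ex_derive. unfold h, k, std_normal_pdf, gauss_kernel.
    auto_derive. exact I.
  - intros z. unfold h, k, a. pose proof (tanh_integrand_ge s z Hs). lra.
Qed.

(* The numerical inequality at the end: for s >= 2.83, exp(s/2) >= 4.1 (degree-5
   Taylor bound) and sqrt(1 + 3s/5) >= 1.64. *)
Lemma final_numeric s : 283/100 <= s ->
  4/5 < 1 - exp (- s / 2) * (1/5 + / sqrt (1 + 3/5 * s)).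
Proof.
  intros Hs. set (x := s / 2).
  assert (Hx : 283/200 <= x) by (unfold x; lra).
  assert (Hexp : 41/10 <= exp x).
  { eapply Rle_trans; [| apply taylor5_le_exp; lra]. unfold taylor5.
    assert ((283/200)^2 <= x^2) by (apply pow_incr; lra).
    assert ((283/200)^3 <= x^3) by (apply pow_incr; lra).
    assert ((283/200)^4 <= x^4) by (apply pow_incr; lra).
    assert ((283/200)^5 <= x^5) by (apply pow_incr; lra).
    simpl in *. lra. }
  assert (Hsqrt : 41/25 <= sqrt (1 + 3/5 * s)).
  { rewrite <- (sqrt_pow2 (41/25)) by lra. apply sqrt_le_1_alt. simpl. lra. }
  replace (exp (- s / 2)) with (/ exp x) by (rewrite <- exp_Ropp; f_equal; unfold x; field).
  assert (0 < / exp x <= / (41/10)) by (split; [apply Rinv_0_lt_compat, exp_pos | apply Rinv_le_contravar; lra]).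
  assert (0 < / sqrt (1 + 3/5 * s) <= / (41/25)) by (split; [apply Rinv_0_lt_compat | apply Rinv_le_contravar]; lra).
  assert (/ exp x * (1/5 + / sqrt (1 + 3/5 * s)) <= / (41/10) * (1/5 + / (41/25)))
    by (apply Rmult_le_compat; lra).
  replace (/ (41/10) * (1/5 + / (41/25))) with (10/41 * (1/5 + 25/41)) in * by field.
  lra.
Qed.

Theorem mainTheorem19 :
  forall r : nat, (7 <= r)%nat ->
    exists x : R, 0 < x < 1 /\ g_r r x > x.
Proof.
  intros r Hr. exists (4/5). split; [lra |].
  pose proof (s_r_four_fifths_ge r Hr) as Hs.
  pose proof (tanh_gauss_average_ge (s_r r (4/5)) ltac:(lra)) as Havg.
  pose proof (final_numeric (s_r r (4/5)) Hs) as Hnum.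
  unfold g_r. lra.
Qed.
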